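(* In the model and for the Algorithm $A$ described in the context, fix $h,\ell$ and a realization of the sample information $\psi$, and let $n_1=h-s_1$, $n_2=\ell-s_2$. Let $I_{\mathrm{order}}$ be the arrival sequence in which the $n_2$ type 2 agents arrive first, followed by the $n_1$ type 1 agents, and let $I$ be any arrival sequence containing $n_2$ type 2 agents and $n_1$ type 1 agents. Then $$\frac{\mathbb E[\mathrm{REW}_A(I_{\mathrm{order}},\psi)]}{\mathrm{OPT}(I_{\mathrm{order}})}\le\frac{\mathbb E[\mathrm{REW}_A(I,\psi)]}{\mathrm{OPT}(I)}.$$
   Context: Model: a decision-maker has $m$ units of a divisible resource; an accepted type-$i$ agent ($i\in\{1,2\}$) yields a reward in $\{0,1\}$ with mean $r_i\in(0,1)$, $r_1>r_2$, unknown. An adversary chooses integers $h,\ell\ge0$; each agent is independently sampled with known probability $p\in(0,1)$; $s_1\sim\mathrm{Bin}(h,p)$, $s_2\sim\mathrm{Bin}(\ell,p)$; sampled agents reveal realized rewards $\rho_{i,j}\sim\mathrm{Ber}(r_i)$; $\psi$ is the sample information. Remaining agents arrive online in order $I$ and are irrevocably accepted (possibly fractionally) or rejected, total allocation at most $m$. $\mathrm{OPT}(I)=r_1\min\{n_1,m\}+r_2\min\{n_2,(m-n_1)^+\}$; $\mathrm{REW}_A(I,\psi)$ is the cumulative expected reward of $A$; $\mathbb E$ is over the algorithm's randomness. Protection level policy for type $i$ with level $x$: accept type $i$ agents while resource remains; accept type $-i$ agents only while fewer than $m-x$ type $-i$ agents have been accepted and resource remains. Algorithm $A$: $\hat r_i=\frac1{s_i}\sum_j\rho_{i,j}$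 if $s_i>0$, else $\hat r_i\sim\mathrm{Uniform}(0,1)$; if $\hat r_1>\hat r_2$ use the protection level policy for type 1 with level $\min\{m,s_1\frac{1-p}{p}\}$, otherwise for type 2 with level $\min\{m,s_2\frac{1-p}{p}\}$. *)

(* Types: true = type 1 agent, false = type 2 agent. *)
From HB Require Import structures.
From mathcomp Require Import all_boot all_order all_algebra.
Set Implicit Arguments. Unset Strict Implicit. Unset Printing Implicit Defensive.
Import Order.TTheory GRing.Theory Num.Theory.
Local Open Scope ring_scope.

Section Model.
Variable R : realFieldType.

Definition mean_rew (r1 r2 : R) (t : bool) : R := if t then r1 else r2.

(* State of the protection level policy: (remaining resource,
   amount of unprotected-type agents accepted so far, cumulative expected reward). *)
Definition pl_step (r1 r2 m : R) (i : bool) (x : R) (st : R * R * R) (t : bool)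
  : R * R * R :=
  let: (c, a, w) := st in
  let amt := if t == i then Num.min 1 c
             else Num.max 0 (Num.min (Num.min 1 c) ((m - x) - a)) in
  (c - amt, (if t == i then a else a + amt), w + mean_rew r1 r2 t * amt).

Definition pl_reward (r1 r2 m : R) (i : bool) (x : R) (I : seq bool) : R :=
  (foldl (pl_step r1 r2 m i x) (m, 0, 0) I).2.

(* Empirical mean of a sample of realized rewards (only used when nonempty). *)
Definition emp_mean (rho : seq bool) : R := (count id rho)%:R / (size rho)%:R.

(* Probability (over the algorithm's uniform draws used when s_i = 0)
   that  \hat r_1 > \hat r_2. *)
Definition prob_hat1_gt (rho1 rho2 : seq bool) : R :=
  match size rho1, size rho2 with
  | 0%N, 0%N => 1 / 2                      (* P[U1 > U2] *)
  | 0%N, _ => 1 - emp_mean rho2            (* P[U > \hat r_2] *)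
  | _, 0%N => emp_mean rho1                (* P[\hat r_1 > U] *)
  | _, _ => if emp_mean rho2 < emp_mean rho1 then 1 else 0
  end.

Definition prot_level (m p : R) (s : nat) : R := Num.min m (s%:R * (1 - p) / p).

(* E[REW_A(I, psi)] where psi = (rho1, rho2) are the realized sampled rewards,
   s1 = size rho1, s2 = size rho2. *)
Definition exp_rew_A (r1 r2 p : R) (m : nat) (rho1 rho2 : seq bool) (I : seq bool) : R :=
  let q := prob_hat1_gt rho1 rho2 in
  q * pl_reward r1 r2 m%:R true (prot_level m%:R p (size rho1)) I
  + (1 - q) * pl_reward r1 r2 m%:R false (prot_level m%:R p (size rho2)) I.

Definition OPT (r1 r2 : R) (m : nat) (I : seq bool) : R :=
  let n1 := count id I in let n2 := count negb I in
  r1 * (minn n1 m)%:R + r2 * (minn n2 (m - n1))%:R.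

End Model.

Definition I_order (n1 n2 : nat) : seq bool := nseq n2 false ++ nseq n1 true.

(* OPT only depends on how many agents of each type arrive, and the expected
   reward of A is a convex combination of the rewards of two protection level
   policies, so it suffices that every protection level policy earns least on
   I_order.  Along any arrival sequence a policy with level x accepts an amount
   ap of the protected type and au of the other type; ap is all protected
   arrivals unless the resource runs out, and au is all other arrivals unless
   the resource runs out or au reaches m - x.  Hence, compared with I, on
   I_order the policy accepts no more type-1 units and no more units in total;
   since r2 <= r1 it earns no more. *)
From mathcomp Require Import all_boot all_order all_algebra.
From mathcomp Require Import ring lra.
Import Order.TTheory GRing.Theory Num.Theory.
Local Open Scope ring_scope.

Lemma dominated_weighted_sum_le (R : realFieldType) (v1 v2 b1 b2 a1 a2 : R) :
  0 <= v2 <= v1 -> b1 <= a1 -> b1 + b2 <= a1 + a2 ->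
  v1 * b1 + v2 * b2 <= v1 * a1 + v2 * a2.
Proof. by move=> ? ? ?; nra. Qed.

Section ProtectionLevel.
Variables (R : realFieldType) (r1 r2 m x : R) (i : bool).

(* From remaining resource c, with a units of the unprotected type accepted so
   far, the policy accepts ap of np protected and au of nu unprotected arrivals. *)
Record pl_outcome (c a np nu ap au : R) : Prop := PLOutcome {
  pl_prot_bound : 0 <= ap <= np;
  pl_unprot_bound : 0 <= au <= nu;
  pl_resource_bound : ap + au <= c;
  pl_cap_bound : a + au <= m - x;
  pl_prot_tight : ap = np \/ ap + au = c;
  pl_unprot_tight : au = nu \/ ap + au = c \/ a + au = m - x }.

Lemma pl_outcome_cat (c a np nu ap au np' nu' ap' au' : R) :
  pl_outcome c a np nu ap au ->
  pl_outcome (c - ap - au) (a + au) np' nu' ap' au' ->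
  pl_outcome c a (np + np') (nu + nu') (ap + ap') (au + au').
Proof.
by move=> O O'; case: O; case: O' => *; split; lra.
Qed.

Lemma pl_step_outcome (c a w : R) (t : bool) : 0 <= c -> a <= m - x ->
  exists ap au,
    pl_step r1 r2 m i x (c, a, w) t
      = (c - ap - au, a + au,
         w + mean_rew r1 r2 i * ap + mean_rew r1 r2 (~~ i) * au)
    /\ pl_outcome c a (t == i)%:R (t != i)%:R ap au.
Proof.
move=> Hc Ha; rewrite /pl_step.
have min_cases (u v : R) : Num.min u v <= u /\ Num.min u v <= v
                           /\ (Num.min u v = u \/ Num.min u v = v).
  by rewrite minEle; case: (leP u v); lra.
case: (t =P i) => [-> | /eqP ti].
  have := min_cases 1 c; set amt := Num.min 1 c => Hamt.
  exists amt, 0; rewrite /=; split; first by congr (_, _, _); ring.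
  by split; lra.
have -> : t = ~~ i by move: ti; case: t; case: i.
have := min_cases 1 c; have := min_cases (Num.min 1 c) (m - x - a).
set amt := Num.min (Num.min 1 c) (m - x - a) => Hamt Hamt1.
have -> : Num.max 0 amt = amt by apply/max_r; lra.
exists 0, amt; rewrite /=; split; first by congr (_, _, _); ring.
by split; lra.
Qed.

Lemma pl_foldl_outcome (s : seq bool) (c a w : R) : 0 <= c -> a <= m - x ->
  exists ap au,
    foldl (pl_step r1 r2 m i x) (c, a, w) s
      = (c - ap - au, a + au,
         w + mean_rew r1 r2 i * ap + mean_rew r1 r2 (~~ i) * au)
    /\ pl_outcome c a (count (pred1 i) s)%:R (count (predC1 i) s)%:R ap au.
Proof.
elim: s c a w => [|t s IHs] c a w Hc Ha.
  exists 0, 0; split; first by congr (_, _, _); ring.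
  by split=> /=; lra.
have [ap [au [step_eq O]]] := pl_step_outcome c a w t Hc Ha.
cbn [foldl]; rewrite step_eq.
have [Hc' Ha'] : 0 <= c - ap - au /\ a + au <= m - x by case: O; lra.
have [ap' [au' [-> O']]] := IHs _ _
  (w + mean_rew r1 r2 i * ap + mean_rew r1 r2 (~~ i) * au) Hc' Ha'.
exists (ap + ap'), (au + au'); split; first by congr (_, _, _); ring.
by rewrite /= !natrD; apply: pl_outcome_cat O O'.
Qed.

Lemma pl_reward_I_order_le (I : seq bool) (n1 n2 : nat) :
  0 <= r2 <= r1 -> 0 <= m -> x <= m ->
  count id I = n1 -> count negb I = n2 ->
  pl_reward r1 r2 m i x (I_order n1 n2) <= pl_reward r1 r2 m i x I.
Proof.
move=> Hr Hm Hx cI1 cI2; have Ha0 : 0 <= m - x by lra.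
have cI b : count (pred1 b) I = (if b then n1 else n2)
            /\ count (predC1 b) I = (if b then n2 else n1).
  by rewrite -cI1 -cI2; case: b; split; apply: eq_count; case.
rewrite /pl_reward /I_order foldl_cat.
have [ap [au [-> O]]] := pl_foldl_outcome I m 0 0 Hm Ha0.
have [ap1 [au1 [-> O1]]] := pl_foldl_outcome (nseq n2 false) m 0 0 Hm Ha0.
have [Hc1 Ha1] : 0 <= m - ap1 - au1 /\ 0 + au1 <= m - x by case: O1; lra.
have [ap2 [au2 [-> O2]]] := pl_foldl_outcome (nseq n1 true) _ _
  (0 + mean_rew r1 r2 i * ap1 + mean_rew r1 r2 (~~ i) * au1) Hc1 Ha1.
move: O O1 O2; rewrite (proj1 (cI i)) (proj2 (cI i)) !count_nseq /=.
case: i => /=; rewrite ?mul0n ?mul1n.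
- move=> [? ? ? ? ? ?] [? ? ? ? _ ?] [? ? ? ? _ _].
  have [-> ->] : ap1 = 0 /\ au2 = 0 by lra.
  suff : r1 * ap2 + r2 * au1 <= r1 * ap + r2 * au by lra.
  by apply: dominated_weighted_sum_le => //; lra.
- move=> [? ? ? ? ? ?] [? ? ? ? ? _] [? ? ? ? _ _].
  have [-> ->] : au1 = 0 /\ ap2 = 0 by lra.
  suff : r1 * au2 + r2 * ap1 <= r1 * au + r2 * ap by lra.
  by apply: dominated_weighted_sum_le => //; lra.
Qed.

End ProtectionLevel.

Lemma emp_mean_in01 (R : realFieldType) (rho : seq bool) :
  0 <= emp_mean R rho <= 1.
Proof.
rewrite /emp_mean; have [-> | sz_gt0] := posnP (size rho).
  by rewrite invr0 mulr0 lexx ler01.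
by rewrite divr_ge0 //= ler_pdivrMr ?ltr0n // mul1r ler_nat count_size.
Qed.

Lemma prob_hat1_gt_in01 (R : realFieldType) (rho1 rho2 : seq bool) :
  0 <= prob_hat1_gt R rho1 rho2 <= 1.
Proof.
have := emp_mean_in01 R rho1; have := emp_mean_in01 R rho2.
rewrite /prob_hat1_gt; case: (size rho1) => [|?]; case: (size rho2) => [|?];
  try case: ifP; lra.
Qed.

Lemma prot_level_le (R : realFieldType) (m p : R) (s : nat) :
  prot_level m p s <= m.
Proof. by rewrite /prot_level ge_min lexx. Qed.

Lemma OPT_ge0 (R : realFieldType) (r1 r2 : R) (m : nat) (I : seq bool) :
  0 <= r1 -> 0 <= r2 -> 0 <= OPT r1 r2 m I.
Proof. by move=> ? ?; rewrite /OPT addr_ge0 ?mulr_ge0. Qed.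

Lemma OPT_I_order (R : realFieldType) (r1 r2 : R) (m : nat) (I : seq bool) :
  OPT r1 r2 m (I_order (count id I) (count negb I)) = OPT r1 r2 m I.
Proof.
by rewrite /OPT /I_order !count_cat !count_nseq /= !mul0n !mul1n add0n addn0.
Qed.

Theorem lemma1 (R : realFieldType) (m : nat) (p r1 r2 : R) (h l : nat)
    (rho1 rho2 : seq bool) (I : seq bool) :
  0 < p < 1 -> 0 < r1 < 1 -> 0 < r2 < 1 -> r2 < r1 ->
  (size rho1 <= h)%N -> (size rho2 <= l)%N ->
  count id I = (h - size rho1)%N -> count negb I = (l - size rho2)%N ->
  let Io := I_order (h - size rho1) (l - size rho2) in
  exp_rew_A r1 r2 p m rho1 rho2 Io / OPT r1 r2 m Io
    <= exp_rew_A r1 r2 p m rho1 rho2 I / OPT r1 r2 m I.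
Proof.
move=> _ Hr1 Hr2 Hr12 _ _ cI1 cI2 /=; rewrite -cI1 -cI2 OPT_I_order.
apply: ler_wpM2r; first by rewrite invr_ge0 OPT_ge0 //; lra.
have Hr : 0 <= r2 <= r1 by lra.
have pl_le b s := @pl_reward_I_order_le R r1 r2 m%:R (prot_level m%:R p s) b I
                    _ _ Hr (ler0n R m) (prot_level_le R m%:R p s) erefl erefl.
have := prob_hat1_gt_in01 R rho1 rho2; rewrite /exp_rew_A => /andP[q_ge0 q_le1].
by rewrite lerD // ler_wpM2l ?subr_ge0 ?pl_le.
Qed.
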